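(* Let $(\Omega,\Sigma,\mu)$ be a measure space with the direct sum property and $L^0=L^0(\Omega,\Sigma,\mu)$. For every nonzero derivation $\delta:L^0\to L^0$ there exist a sequence $(\lambda_n)_{n=1}^\infty$ in $L^0$ with $|\lambda_n|\le\mathbf 1$ for all $n\in\mathbb N$, and a nonzero idempotent $\pi\in\nabla$, such that $$|\delta(\lambda_n)|\ge n\pi\quad\text{for all } n\in\mathbb N.$$
   Context: $L^0(\Omega,\Sigma,\mu)$ is the algebra of equivalence classes (a.e. equality) of complex measurable functions, with unit $\mathbf 1$ and the usual a.e. order on real-valued elements; $\mu$ has the direct sum property: there is a family $\{\Omega_i\}_{i\in J}\subset\Sigma$, $0<\mu(\Omega_i)<\infty$, such that each $A\in\Sigma$ of finite measure equals $\bigcup_{i\in J_0}(A\cap\Omega_i)\cup B$ with $J_0$ countable and $B$ null. A derivation is a linear map $\delta$ with $\delta(xy)=\delta(x)y+x\delta(y)$. $\nabla=\{\tilde\chi_A:A\in\Sigma\}$ is the set of idempotents of $L^0$ (classes of characteristic functions of measurable sets). *)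

From HB Require Import structures.
From mathcomp Require Import all_boot all_order all_algebra.
From mathcomp Require Import all_classical all_reals all_analysis.
From mathcomp.real_closed Require Import complex.
Set Implicit Arguments. Unset Strict Implicit. Unset Printing Implicit Defensive.
Import Order.TTheory GRing.Theory Num.Theory.
Local Open Scope classical_set_scope.
Local Open Scope ring_scope.

Definition cmod (R : realType) (z : R[i]) : R :=
  Num.sqrt (complex.Re z ^+ 2 + complex.Im z ^+ 2).

(* complex-valued measurable function: real and imaginary parts are
   Borel measurable (Borel sigma-algebra of C = product of those of R) *)
Definition cmeas d (T : measurableType d) (R : realType) (f : T -> R[i]) :=
  measurable_fun setT (fun x => complex.Re (f x)) /\
  measurable_fun setT (fun x => complex.Im (f x)).

Definition aeeq d (T : measurableType d) (R : realType)
  (mu : {measure set T -> \bar R}) (f g : T -> R[i]) :=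
  {ae mu, forall x, f x = g x}.

Definition direct_sum_property d (T : measurableType d) (R : realType)
  (mu : {measure set T -> \bar R}) :=
  exists (J : Type) (Om : J -> set T),
    (forall i, measurable (Om i) /\ (0 < mu (Om i))%E /\ (mu (Om i) < +oo)%E) /\
    (forall A, measurable A -> (mu A < +oo)%E ->
       exists (J0 : set J) (B : set T),
         countable J0 /\ measurable B /\ mu B = 0%E /\
         A = \bigcup_(i in J0) (A `&` Om i) `|` B).

(* A derivation delta : L^0 -> L^0, represented on measurable representatives:
   it maps measurable functions to measurable functions, is compatible with
   a.e. equality (so it is a well-defined map on equivalence classes), and is
   C-linear and satisfies the Leibniz rule in L^0 (i.e. up to a.e. equality). *)
Definition derivation d (T : measurableType d) (R : realType)
  (mu : {measure set T -> \bar R}) (delta : (T -> R[i]) -> (T -> R[i])) :=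
  [/\ (forall f, cmeas f -> cmeas (delta f)),
      (forall f g, cmeas f -> cmeas g -> aeeq mu f g ->
          aeeq mu (delta f) (delta g)),
      (forall (a b : R[i]) f g, cmeas f -> cmeas g ->
          aeeq mu (delta (fun x => a * f x + b * g x))
                  (fun x => a * delta f x + b * delta g x)) &
      (forall f g, cmeas f -> cmeas g ->
          aeeq mu (delta (fun x => f x * g x))
                  (fun x => delta f x * g x + f x * delta g x))].

Definition nonzero_derivation d (T : measurableType d) (R : realType)
  (mu : {measure set T -> \bar R}) (delta : (T -> R[i]) -> (T -> R[i])) :=
  exists f, cmeas f /\ ~ aeeq mu (delta f) (fun _ => 0).

From HB Require Import structures.
From mathcomp Require Import all_boot all_order all_algebra.
From mathcomp Require Import all_classical all_reals all_analysis.
From mathcomp.real_closed Require Import complex.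
From mathcomp Require Import ring.
Set Implicit Arguments. Unset Strict Implicit. Unset Printing Implicit Defensive.
Import Order.TTheory GRing.Theory Num.Theory numFieldNormedType.Exports.
Local Open Scope classical_set_scope.
Local Open Scope ring_scope.
Local Open Scope complex_scope.

(* If delta f <> 0, then delta h <> 0 for h the real or the imaginary part
   of f.  Its Cayley transform g = (h - i)/(h + i) is unimodular and,
   by the Leibniz rule, delta g = 2i delta h / (h + i)^2 <> 0, so
   |delta g| >= 1/(k+1) on some non-null set S.  The powers
   lam_n = g^(n(k+1)) are again unimodular and |delta lam_n| = n(k+1)|delta g|
   >= n on S. *)

Section ComplexModulus.
Variable R : realType.
Implicit Types (z w : R[i]) (r : R).

Lemma cmod_normr z : (cmod z)%:C = `|z|.
Proof. by rewrite normc_def. Qed.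

Lemma cmod_ge0 z : 0 <= cmod z.
Proof. exact: sqrtr_ge0. Qed.

Lemma cmodM z w : cmod (z * w) = cmod z * cmod w.
Proof. by apply: (complexI (R := R)); rewrite rmorphM /= !cmod_normr normrM. Qed.

Lemma cmod1 : cmod (1 : R[i]) = 1.
Proof. by apply: (complexI (R := R)); rewrite cmod_normr normr1. Qed.

Lemma cmodX z n : cmod (z ^+ n) = cmod z ^+ n.
Proof. by elim: n => [|n IH]; rewrite ?expr0 ?cmod1 // !exprS cmodM IH. Qed.

Lemma cmod_nat n : cmod (n%:R : R[i]) = n%:R.
Proof. by apply: (complexI (R := R)); rewrite cmod_normr normr_nat rmorph_nat. Qed.

Lemma cmod_eq0 z : (cmod z == 0) = (z == 0).
Proof. by rewrite -[z == 0]normr_eq0 -cmod_normr (inj_eq (@complexI R)). Qed.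

Lemma cmod_conjc z : cmod z^* = cmod z.
Proof. by case: z => a b; rewrite /cmod /= sqrrN. Qed.

Lemma Re_add z w : complex.Re (z + w) = complex.Re z + complex.Re w.
Proof. by case: z; case: w. Qed.

Lemma Im_add z w : complex.Im (z + w) = complex.Im z + complex.Im w.
Proof. by case: z; case: w. Qed.

Lemma Re_mul z w :
  complex.Re (z * w) = complex.Re z * complex.Re w - complex.Im z * complex.Im w.
Proof. by case: z; case: w. Qed.

Lemma Im_mul z w :
  complex.Im (z * w) = complex.Re z * complex.Im w + complex.Im z * complex.Re w.
Proof. by case: z; case: w. Qed.

End ComplexModulus.

Section Cayley.
Variable R : realType.
Implicit Types r : R.

(* ['i%C] is the constructor [Complex 0 1]; the bare ['i] would elaborate to
   [Num.imaginary], which [ring]/[field] treat as a different atom. *)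
Definition cayley r : R[i] := (r%:C - 'i%C) / (r%:C + 'i%C).

Lemma real_addi_neq0 r : r%:C + 'i%C != 0.
Proof. by apply/eqP => /(congr1 (@complex.Im R)) /= /eqP; rewrite add0r oner_eq0. Qed.

Lemma real_addi_inv r : (r%:C + 'i%C)^-1 = ((r ^+ 2 + 1)^-1)%:C * (r%:C - 'i%C).
Proof.
apply: (mulfI (real_addi_neq0 r)); rewrite mulfV ?real_addi_neq0 // mulrCA.
have -> : (r%:C + 'i%C) * (r%:C - 'i%C) = (r ^+ 2 + 1)%:C.
  transitivity (r%:C ^+ 2 - 'i%C ^+ 2); first by ring.
  by rewrite sqr_i opprK rmorphD rmorphXn rmorph1.
by rewrite -rmorphM mulVf // lt0r_neq0 // ltr_pwDr // sqr_ge0.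
Qed.

Lemma cmod_cayley r : cmod (cayley r) = 1.
Proof.
rewrite /cayley; have -> : r%:C - 'i%C = (r%:C + 'i%C)^*.
  by apply/eqP; rewrite eq_complex /= subr0 addr0 sub0r add0r !eqxx.
have nz : cmod (r%:C + 'i%C) != 0 by rewrite cmod_eq0 real_addi_neq0.
rewrite cmodM cmod_conjc; apply: (mulfI nz).
by rewrite -cmodM mulfV ?real_addi_neq0 // cmod1 mulr1.
Qed.

End Cayley.

Section ComplexMeasurable.
Context d (T : measurableType d) (R : realType).
Implicit Types (f g : T -> R[i]) (h : T -> R).

Lemma cmeas_cst (c : R[i]) : cmeas (fun _ : T => c).
Proof. by split; apply: measurable_cst. Qed.

Lemma cmeas_real h : measurable_fun setT h -> cmeas (fun x => (h x)%:C).
Proof. by move=> mh; split => //=; apply: measurable_cst. Qed.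

Lemma cmeas_add f g : cmeas f -> cmeas g -> cmeas (fun x => f x + g x).
Proof.
move=> [mf1 mf2] [mg1 mg2]; split.
  by under eq_fun do rewrite Re_add; apply: measurable_realfun.measurable_funD.
by under eq_fun do rewrite Im_add; apply: measurable_realfun.measurable_funD.
Qed.

Lemma cmeas_mul f g : cmeas f -> cmeas g -> cmeas (fun x => f x * g x).
Proof.
move=> [mf1 mf2] [mg1 mg2]; split.
  under eq_fun do rewrite Re_mul.
  by apply: measurable_realfun.measurable_funB; apply: measurable_realfun.measurable_funM.
under eq_fun do rewrite Im_mul.
by apply: measurable_realfun.measurable_funD; apply: measurable_realfun.measurable_funM.
Qed.

Lemma cmeas_exp f n : cmeas f -> cmeas (fun x => f x ^+ n).
Proof.
move=> mf; elim: n => [|n IH]; first exact: cmeas_cst.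
by under eq_fun do rewrite exprSr; apply: cmeas_mul.
Qed.

Lemma measurable_cmod f : cmeas f -> measurable_fun setT (fun x => cmod (f x)).
Proof.
move=> [mf1 mf2].
have msqrt := measurable_realfun.continuous_measurable_fun (@sqrt_continuous R).
apply: measurableT_comp msqrt _.
by apply: measurable_realfun.measurable_funD; apply: measurable_realfun.measurable_funX.
Qed.

Lemma cmeas_real_addi_inv h : measurable_fun setT h ->
  cmeas (fun x => ((h x)%:C + 'i%C)^-1).
Proof.
move=> mh; under eq_fun do rewrite real_addi_inv.
apply: cmeas_mul; last exact/cmeas_add/cmeas_cst/cmeas_real.
have mV : measurable_fun setT (fun r : R => (r ^+ 2 + 1)^-1).
  apply: measurable_realfun.continuous_measurable_fun => r.
  have cD : continuous (fun r : R => r ^+ 2 + 1).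
    move=> x; have := @continuousD R R^o R (fun x : R => x ^+ 2) (fun=> 1) x.
    by move=> /(_ (@exprn_continuous R 2 x) (@cst_continuous R R 1 x)).
  apply: (@continuousV _ _ (fun x : R => x ^+ 2 + 1) r _ (cD r)).
  by rewrite lt0r_neq0 // ltr_pwDr // sqr_ge0.
exact/cmeas_real/(measurableT_comp mV mh).
Qed.

Lemma cmeas_cayley h : measurable_fun setT h -> cmeas (fun x => cayley (h x)).
Proof.
move=> mh; apply: cmeas_mul; last exact: cmeas_real_addi_inv.
exact/cmeas_add/cmeas_cst/cmeas_real.
Qed.

End ComplexMeasurable.

Lemma not_ae_le0_level_set d (T : measurableType d) (R : realType)
    (mu : {measure set T -> \bar R}) (F : T -> R) :
  measurable_fun setT F -> ~ {ae mu, forall x, F x <= 0} ->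
  exists k : nat, let S := [set x | k.+1%:R^-1 <= F x] in
    measurable S /\ mu S <> 0%E.
Proof.
move=> mF notle0.
have mS (k : nat) : measurable [set x | k.+1%:R^-1 <= F x].
  have -> : [set x | k.+1%:R^-1 <= F x] = setT `&` F @^-1` `[k.+1%:R^-1, +oo[.
    by apply/seteqP; split => x /=; rewrite in_itv /= andbT; [move=> ?; split|case].
  by apply: mF => //; exact: measurable_itv.
apply: contrapT => null; apply: notle0.
have : mu.-negligible (\bigcup_k [set x | k.+1%:R^-1 <= F x]).
  apply: negligible_bigcup => k; exists [set x | k.+1%:R^-1 <= F x].
  by split => //; apply: contrapT => ne; apply: null; exists k.
apply: negligibleS => x /= /negP; rewrite -ltNge => Fx_gt0.
have inv_ge0 : 0 <= (F x)^-1 by rewrite invr_ge0 ltW.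
exists (Num.bound (F x)^-1) => //=.
rewrite -[leRHS]invrK lef_pV2 ?posrE ?ltr0n ?invr_gt0 //.
by rewrite (le_trans (ltW (archi_boundP inv_ge0))) // ler_nat.
Qed.

Section Derivation.
Context d (T : measurableType d) (R : realType).
Variables (mu : {measure set T -> \bar R}) (delta : (T -> R[i]) -> T -> R[i]).
Hypothesis hdelta : derivation mu delta.
Implicit Types (f g : T -> R[i]) (h : T -> R).

Lemma derivation_cst (c : R[i]) : {ae mu, forall x, delta (fun=> c) x = 0}.
Proof.
have [_ _ dlin dleib] := hdelta.
have d1 : {ae mu, forall x, delta (fun=> 1) x = 0}.
  have := dleib _ _ (cmeas_cst T 1) (cmeas_cst T 1).
  under [X in delta X]eq_fun do rewrite mulr1.
  apply: filterS => x; rewrite !mulr1 mul1r => /eqP.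
  by rewrite addrC -subr_eq subrr eq_sym => /eqP.
have := dlin c 0 _ _ (cmeas_cst T 1) (cmeas_cst T 1).
under [X in delta X]eq_fun do rewrite mulr1 mul0r addr0.
by apply: filterS2 d1 => x -> ->; rewrite mulr0 mul0r addr0.
Qed.

Lemma derivation_addr_cst f (c : R[i]) : cmeas f ->
  {ae mu, forall x, delta (fun x => f x + c) x = delta f x}.
Proof.
have [_ _ dlin _] := hdelta.
move=> mf; have := dlin 1 c _ _ mf (cmeas_cst T 1).
under [X in delta X]eq_fun do rewrite mul1r mulr1.
by apply: filterS2 (derivation_cst 1) => x -> ->; rewrite mul1r mulr0 addr0.
Qed.

Lemma derivation_inv f : cmeas f -> cmeas (fun x => (f x)^-1) ->
  (forall x, f x != 0) ->
  {ae mu, forall x, delta (fun x => (f x)^-1) x = - delta f x / f x ^+ 2}.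
Proof.
have [_ _ _ dleib] := hdelta.
move=> mf mVf f_neq0; have := dleib _ _ mf mVf.
under [X in delta X]eq_fun do rewrite mulfV ?f_neq0 //.
apply: filterS2 (derivation_cst 1) => x -> /eqP.
rewrite eq_sym addrC addr_eq0 => /eqP E.
apply: (mulfI (f_neq0 x)); rewrite E; field.
by rewrite f_neq0.
Qed.

Lemma derivation_exp f n : cmeas f ->
  {ae mu, forall x, delta (fun x => f x ^+ n.+1) x = n.+1%:R * f x ^+ n * delta f x}.
Proof.
have [_ _ _ dleib] := hdelta.
move=> mf; elim: n => [|n IH].
  under [X in delta X]eq_fun do rewrite expr1.
  by apply: aeW => x; rewrite mul1r expr0 mul1r.
have := dleib _ _ (cmeas_exp n.+1 mf) mf.
under [X in delta X]eq_fun do rewrite -exprSr.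
apply: filterS2 IH => x -> ->.
by rewrite -[n.+2]addn1 natrD exprSr; ring.
Qed.

Lemma cmod_derivation_exp_unimodular f n : cmeas f -> (forall x, cmod (f x) = 1) ->
  {ae mu, forall x, cmod (delta (fun x => f x ^+ n) x) = n%:R * cmod (delta f x)}.
Proof.
move=> mf f_unit; case: n => [|n].
  under [X in delta X]eq_fun do rewrite expr0.
  by apply: filterS (derivation_cst 1) => x ->; rewrite mul0r (cmod_nat R 0).
apply: filterS (derivation_exp n mf) => x ->.
by rewrite !cmodM cmodX f_unit expr1n mulr1 cmod_nat.
Qed.

Lemma derivation_cayley h : measurable_fun setT h ->
  {ae mu, forall x, delta (fun x => cayley (h x)) x =
    2%:R * 'i%C * delta (fun x => (h x)%:C) x / ((h x)%:C + 'i%C) ^+ 2}.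
Proof.
have [_ _ _ dleib] := hdelta.
move=> mh; have mu_h := cmeas_real mh.
have Dinv := derivation_inv (cmeas_add mu_h (cmeas_cst T 'i%C))
  (cmeas_real_addi_inv mh) (fun x => real_addi_neq0 (h x)).
have Dcayley :=
  dleib _ _ (cmeas_add mu_h (cmeas_cst T (- 'i%C))) (cmeas_real_addi_inv mh).
have Dpi := derivation_addr_cst 'i%C mu_h.
have Dmi := derivation_addr_cst (- 'i%C) mu_h.
rewrite /cayley; near=> x.
rewrite (near Dcayley x) // (near Dmi x) // (near Dinv x) // (near Dpi x) //.
by field; rewrite real_addi_neq0.
Unshelve. all: by end_near.
Qed.

Lemma derivation_cayley_neq0 h : measurable_fun setT h ->
  ~ {ae mu, forall x, delta (fun x => (h x)%:C) x = 0} ->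
  ~ {ae mu, forall x, cmod (delta (fun x => cayley (h x)) x) <= 0}.
Proof.
move=> mh Dh_neq0 Dcayley_le0; apply: Dh_neq0.
apply: filterS2 Dcayley_le0 (derivation_cayley mh) => x le0 Dcayley.
have : delta (fun x => cayley (h x)) x == 0.
  by rewrite -cmod_eq0 eq_le le0 cmod_ge0.
rewrite Dcayley !mulf_eq0 invr_eq0 expf_eq0 (negbTE (real_addi_neq0 _)) pnatr_eq0.
have i_neq0 : 'i%C != 0 :> R[i] by have := real_addi_neq0 (0 : R); rewrite add0r.
by rewrite (negbTE i_neq0) andbF orbF /= => /eqP.
Qed.

Lemma derivation_nonzero_real : nonzero_derivation mu delta ->
  exists h : T -> R, measurable_fun setT h /\
    ~ {ae mu, forall x, delta (fun x => (h x)%:C) x = 0}.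
Proof.
have [_ _ dlin _] := hdelta.
move=> [f [[mRe mIm] Df_neq0]].
pose D0 h := {ae mu, forall x, delta (fun x => (h x)%:C) x = 0}.
have [DRe_neq0|/contrapT DRe0] := pselect (~ D0 (fun x => complex.Re (f x))).
  by exists (fun x => complex.Re (f x)).
have [DIm_neq0|/contrapT DIm0] := pselect (~ D0 (fun x => complex.Im (f x))).
  by exists (fun x => complex.Im (f x)).
exfalso; apply: Df_neq0.
have := dlin 1 'i%C _ _ (cmeas_real mRe) (cmeas_real mIm).
under [X in delta X]eq_fun do rewrite mul1r -complexE.
by apply: filterS3 DRe0 DIm0 => x -> -> ->; rewrite !mulr0 addr0.
Qed.

End Derivation.

Theorem lemma3p3 (d : measure_display) (T : measurableType d) (R : realType)
  (mu : {measure set T -> \bar R}) (delta : (T -> R[i]) -> (T -> R[i])) :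
  direct_sum_property mu ->
  derivation mu delta ->
  nonzero_derivation mu delta ->
  exists (lam : nat -> T -> R[i]) (A : set T),
    (forall n, (0 < n)%N ->
       cmeas (lam n) /\ {ae mu, forall x, cmod (lam n x) <= 1}) /\
    (* pi = class of the indicator of A is a nonzero idempotent of L^0 *)
    measurable A /\ mu A <> 0%E /\
    (forall n, (0 < n)%N ->
       {ae mu, forall x, n%:R * \1_A x <= cmod (delta (lam n) x)}).
Proof.
move=> _ hdelta /(derivation_nonzero_real hdelta) [h [mh Dh_neq0]].
pose g x := cayley (h x).
have mg : cmeas g := cmeas_cayley mh.
have g_unit x : cmod (g x) = 1 := cmod_cayley (h x).
have [mdelta _ _ _] := hdelta.
have [k [mS muS]] := not_ae_le0_level_set (measurable_cmod (mdelta g mg))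
  (derivation_cayley_neq0 hdelta mh Dh_neq0).
exists (fun n x => g x ^+ (n * k.+1)), [set x | k.+1%:R^-1 <= cmod (delta g x)].
split; [|split; [exact: mS|split; [exact: muS|]]] => n _.
  split; first exact: cmeas_exp.
  by apply: aeW => x; rewrite cmodX g_unit expr1n.
apply: filterS (cmod_derivation_exp_unimodular hdelta (n * k.+1) mg g_unit) => x ->.
rewrite indicE; have [Sx|Sx] := pselect ([set x | k.+1%:R^-1 <= cmod (delta g x)] x).
  rewrite mem_set // mulr1 natrM -mulrA -[leLHS]mulr1 ler_wpM2l ?ler0n //.
  by rewrite -ler_pdivrMl ?ltr0n // mulr1.
by rewrite memNset // mulr0 mulr_ge0 ?ler0n ?cmod_ge0.
Qed.
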